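(* For integers $n>1$ and even $m>3$, $\chi_{ld}(W_m[\overline{K_{n}}])=3$.
   Context: All graphs are finite, simple and undirected. For a graph $G=(V,E)$ of order $N$ without isolated vertices, a bijection $f\colon V\to\{1,2,\dots,N\}$ is a local distance antimagic labeling if $w(u)\neq w(v)$ for every edge $uv$, where $w(u)=\sum_{x\in N(u)}f(x)$ and $N(u)$ is the open neighborhood of $u$. $\chi_{ld}(G)$ is the minimum number of distinct weights over all local distance antimagic labelings of $G$. The wheel $W_m=C_m+K_1$ is the cycle $C_m$ together with a central vertex adjacent to all cycle vertices. $\overline{K_n}$ is the edgeless graph on $n$ vertices. The lexicographic product $G[H]$ has vertex set $V(G)\times V(H)$, with $(g,h)$ adjacent to $(g',h')$ iff $gg'\in E(G)$, or $g=g'$ and $hh'\in E(H)$. *)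

From mathcomp Require Import all_boot.
Set Implicit Arguments. Unset Strict Implicit. Unset Printing Implicit Defensive.

Definition simple_graph (T : finType) (e : rel T) : Prop :=
  symmetric e /\ irreflexive e.

Definition ld_weight (T : finType) (e : rel T) (f : T -> nat) (u : T) : nat :=
  \sum_(x | e u x) f x.

Definition is_bij_labeling (T : finType) (f : T -> nat) : Prop :=
  injective f /\ (forall x, 1 <= f x <= #|T|).

Definition local_distance_antimagic (T : finType) (e : rel T) (f : T -> nat) : Prop :=
  is_bij_labeling f /\ (forall u v, e u v -> ld_weight e f u != ld_weight e f v).

Definition num_weights (T : finType) (e : rel T) (f : T -> nat) : nat :=
  size (undup [seq ld_weight e f u | u <- enum T]).

Definition chi_ld_is (T : finType) (e : rel T) (k : nat) : Prop :=
  (exists f, local_distance_antimagic e f /\ num_weights e f = k) /\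
  (forall f, local_distance_antimagic e f -> k <= num_weights e f).

Definition cycle_rel (m : nat) : rel 'I_m :=
  fun i j => (val j == (val i).+1 %% m) || (val i == (val j).+1 %% m).

(* wheel W_m = C_m + K_1 on option 'I_m, None being the centre *)
Definition wheel_rel (m : nat) : rel (option 'I_m) :=
  fun x y => match x, y with
             | None, None => false
             | None, Some _ | Some _, None => true
             | Some i, Some j => cycle_rel i j
             end.

Definition empty_rel (n : nat) : rel 'I_n := fun _ _ => false.

Definition lex_rel (A B : finType) (eG : rel A) (eH : rel B) : rel (A * B) :=
  fun x y => eG x.1 y.1 || ((x.1 == y.1) && eH x.2 y.2).

From mathcomp Require Import all_boot zify.

Set Implicit Arguments.
Unset Strict Implicit.
Unset Printing Implicit Defensive.

(* In W_m[K_n-bar] the weight of (a, j) is the sum, over the wheel neighbours a'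
   of a, of the column sums of f(a', -). Give row j the labels
   j(m+1)+1 .. j(m+1)+m+1, hub first, and permute the rim entries of each row so
   that every rim column sum depends only on the parity of the column, odd
   columns being lighter. As m is even, both neighbours of a rim vertex have the
   parity opposite to its own, so rim weights take two values alternating around
   the cycle, while the hub weight, the sum of all m rim column sums, exceeds
   both. Conversely the wheel contains triangles, which need three weights. *)

Notation lex_wheel m n := (lex_rel (@wheel_rel m) (@empty_rel n)).

Lemma big_option (T : finType) (F : option T -> nat) :
  \sum_a F a = F None + \sum_i F (Some i).
Proof.
rewrite (bigD1 None) //=; congr (_ + _).
rewrite (reindex_omap Some id) /=; last by case=> [a|] //= /negP.
by apply: eq_bigl => i; rewrite eqxx.
Qed.

Lemma eq_mul_add_small d q q' s s' : s < d -> s' < d ->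
  q * d + s = q' * d + s' -> q = q' /\ s = s'.
Proof. by move=> lt_sd lt_s'd e; move: (edivn_eq q lt_sd); rewrite e edivn_eq // => -[]. Qed.

Section Weights.
Variables (T : finType) (e : rel T) (f : T -> nat).

Lemma num_weights_triangle x y z : local_distance_antimagic e f ->
  e x y -> e y z -> e x z -> 3 <= num_weights e f.
Proof.
move=> [_ proper] exy eyz exz; rewrite /num_weights.
set w := ld_weight e f.
apply: (@uniq_leq_size _ [:: w x; w y; w z]).
  by rewrite /= !inE negb_or (proper _ _ exy) (proper _ _ eyz) (proper _ _ exz).
by move=> v; rewrite !inE => /or3P[] /eqP ->; rewrite mem_undup map_f ?mem_enum.
Qed.

Lemma num_weights_eq_size (s : seq nat) : uniq s ->
  (forall u, ld_weight e f u \in s) ->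
  (forall x, x \in s -> exists u, ld_weight e f u = x) ->
  num_weights e f = size s.
Proof.
move=> s_uniq w_in_s s_in_w; apply/perm_size/uniq_perm; rewrite ?undup_uniq // => x.
rewrite mem_undup; apply/mapP/idP => [[u _ ->] // | /s_in_w[u <-]].
by exists u; rewrite ?mem_enum.
Qed.

End Weights.

Lemma ld_weight_lex_empty (A : finType) (eG : rel A) n (f : A * 'I_n -> nat) u :
  ld_weight (lex_rel eG (@empty_rel n)) f u = \sum_(a | eG u.1 a) \sum_(j < n) f (a, j).
Proof.
rewrite /ld_weight /lex_rel /empty_rel.
rewrite (pair_big_dep (eG u.1) (fun _ _ => true) (fun a j => f (a, j))) /=.
by apply: eq_big => [[a j]|[a j] _] //=; rewrite andbF orbF andbT.
Qed.

Lemma succ_modn k m : k < m -> k.+1 %% m = if k.+1 == m then 0 else k.+1.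
Proof. by case: eqP => [->|k_neq] lt_km; rewrite ?modnn // modn_small //; lia. Qed.

Lemma pred_add_modn k m : k < m -> (k + m).-1 %% m = if k == 0 then m.-1 else k.-1.
Proof.
case: eqP => [-> | k_neq0] lt_km; first by rewrite modn_small //; lia.
have -> : (k + m).-1 = k.-1 + m by lia.
by rewrite modnDr modn_small //; lia.
Qed.

Lemma odd_ordS m (i : 'I_m) : ~~ odd m -> odd (ordS i) = ~~ odd i.
Proof. by move=> m_even /=; rewrite succ_modn //; case: eqP; lia. Qed.

Lemma odd_ord_pred m (i : 'I_m) : ~~ odd m -> odd (ord_pred i) = ~~ odd i.
Proof.
by move=> m_even /=; have := ltn_ord i; rewrite pred_add_modn //; case: eqP; lia.
Qed.

Lemma ordS_neq_ord_pred m (i : 'I_m) : 2 < m -> ordS i != ord_pred i.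
Proof.
move=> m_gt2; have lt_im := ltn_ord i.
rewrite -val_eqE /= pred_add_modn // succ_modn //.
by case: (i.+1 =P m); case: (i =P 0 :> nat); lia.
Qed.

Lemma cycle_relE m (i j : 'I_m) : cycle_rel i j = (j == ordS i) || (j == ord_pred i).
Proof.
rewrite /cycle_rel; congr orb.
have -> : (val i == (val j).+1 %% m) = (i == ordS j) by rewrite -val_eqE.
by apply/eqP/eqP => [->|->]; rewrite ?ordSK ?ord_predK.
Qed.

Lemma odd_cycle_rel m (i j : 'I_m) : ~~ odd m -> cycle_rel i j -> odd j = ~~ odd i.
Proof.
by move=> m_even; rewrite cycle_relE => /orP[] /eqP ->;
  rewrite ?odd_ordS ?odd_ord_pred.
Qed.

Lemma sum_cycle_rel m (i : 'I_m) (F : 'I_m -> nat) : 2 < m ->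
  \sum_(j | cycle_rel i j) F j = F (ordS i) + F (ord_pred i).
Proof.
move=> m_gt2; under eq_bigl => j do rewrite cycle_relE.
rewrite (bigD1 (ordS i)) ?eqxx //=; congr (_ + _).
apply: big_pred1 => j /=.
by case: eqVneq => [->|_]; rewrite ?andbT ?(negbTE (ordS_neq_ord_pred i m_gt2)).
Qed.

Lemma sum_wheel_rel_None m (F : option 'I_m -> nat) :
  \sum_(a | wheel_rel None a) F a = \sum_(i < m) F (Some i).
Proof. by rewrite big_mkcond big_option. Qed.

Lemma sum_wheel_rel_Some m (i : 'I_m) (F : option 'I_m -> nat) : 2 < m ->
  \sum_(a | wheel_rel (Some i) a) F a = F None + (F (Some (ordS i)) + F (Some (ord_pred i))).
Proof.
by move=> m_gt2; rewrite big_mkcond big_option /= -big_mkcond sum_cycle_rel.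
Qed.

Lemma lex_wheel_triangle m n : 1 < m -> 0 < n ->
  exists x y z, [/\ lex_wheel m n x y, lex_wheel m n y z & lex_wheel m n x z].
Proof.
move=> m_gt1 n_gt0; pose j : 'I_n := Ordinal n_gt0.
exists (None, j), (Some (Ordinal (ltnW m_gt1)), j), (Some (Ordinal m_gt1), j).
by rewrite /lex_rel /= /cycle_rel /= modn_small.
Qed.

Definition wheel_col m (a : option 'I_m) : nat := if a is Some i then i.+1 else 0.

Lemma wheel_col_le m (a : option 'I_m) : wheel_col a <= m.
Proof. by case: a => //= i; exact: ltn_ord. Qed.

Lemma wheel_col_inj m : injective (@wheel_col m).
Proof. by case=> [i|] [i'|] //= [] /val_inj ->. Qed.

Section GridLabel.
Variables (m n : nat) (r : nat -> nat -> nat).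
Hypothesis r_le : forall j c, c <= m -> r j c <= m.
Hypothesis r_inj : forall j c c', c <= m -> c' <= m -> r j c = r j c' -> c = c'.

Definition grid_label (x : option 'I_m * 'I_n) : nat :=
  x.2 * m.+1 + r x.2 (wheel_col x.1) + 1.

Lemma grid_label_bij : is_bij_labeling grid_label.
Proof.
split=> [[a j] [a' j'] /addIn /= e | [a j]].
  have [/val_inj <- e_r] := @eq_mul_add_small m.+1 _ _ _ _
    (r_le j (wheel_col_le a)) (r_le j' (wheel_col_le a')) e.
  by rewrite (wheel_col_inj (r_inj (wheel_col_le a) (wheel_col_le a') e_r)).
rewrite /grid_label card_prod card_option !card_ord /=.
have := r_le j (wheel_col_le a); have := ltn_ord j; nia.
Qed.

Lemma sum_grid_label a :
  \sum_(j < n) grid_label (a, j) =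
  \sum_(j < n) (j * m.+1 + 1) + \sum_(j < n) r j (wheel_col a).
Proof. by rewrite -big_split; apply: eq_bigr => j _ /=; rewrite addnAC. Qed.

End GridLabel.

Definition flip_col m c := if c == 0 then 0 else if odd c then m - c else m.+2 - c.

Definition fold_col m c := if c == 0 then 0 else if odd c then m./2 - c./2 else m.+1 - c./2.

Lemma flip_col_le m c : flip_col m c <= m.
Proof. by rewrite /flip_col; repeat case: ifP => ?; lia. Qed.

Lemma fold_col_le m c : fold_col m c <= m.
Proof. by rewrite /fold_col; repeat case: ifP => ?; lia. Qed.

Lemma flip_col_inj m c c' : ~~ odd m -> c <= m -> c' <= m ->
  flip_col m c = flip_col m c' -> c = c'.
Proof. by rewrite /flip_col; repeat case: ifP => ?; lia. Qed.

Lemma fold_col_inj m c c' : ~~ odd m -> c <= m -> c' <= m ->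
  fold_col m c = fold_col m c' -> c = c'.
Proof. by rewrite /fold_col; repeat case: ifP => ?; lia. Qed.

Lemma addn_flip_col m c : ~~ odd m -> 0 < c <= m ->
  c + flip_col m c = if odd c then m else m.+2.
Proof. by rewrite /flip_col; repeat case: ifP => ?; lia. Qed.

Lemma double_fold_col m c : ~~ odd m -> 0 < c <= m ->
  (fold_col m c).*2 + c = if odd c then m.+1 else (m.+1).*2.
Proof. by rewrite /fold_col; repeat case: ifP => ?; lia. Qed.

(* An identity row and a [flip_col] row add [m] to odd and [m+2] to even columns;
   for odd [n], two [fold_col] rows and an identity row add [m+1] and [2m+2]. *)
Definition row_perm m n j c :=
  if odd n && (j < 2) then fold_col m c else if odd j then flip_col m c else c.

Lemma row_perm0 m n j : row_perm m n j 0 = 0.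
Proof. by rewrite /row_perm; case: ifP => _; [|case: ifP]. Qed.

Lemma row_perm_le m n j c : c <= m -> row_perm m n j c <= m.
Proof.
by move=> le_cm; rewrite /row_perm; case: ifP => _; [|case: ifP => _];
  rewrite ?fold_col_le ?flip_col_le.
Qed.

Lemma row_perm_inj m n j c c' : ~~ odd m -> c <= m -> c' <= m ->
  row_perm m n j c = row_perm m n j c' -> c = c'.
Proof.
rewrite /row_perm => m_even le_cm le_c'm; case: ifP => _; first exact: fold_col_inj.
by case: ifP => _ //; apply: flip_col_inj.
Qed.

Lemma sum_alternating k c d :
  \sum_(0 <= j < k.*2) (if odd j then d else c) = k * (c + d).
Proof.
elim: k => [|k IHk]; first by rewrite big_geq.
by rewrite doubleS !big_nat_recr //= IHk odd_double /=; lia.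
Qed.

Definition rim_row_sum m n (b : bool) :=
  if odd n then (if b then m.+1 else (m.+1).*2) + (n./2).-1 * (if b then m else m.+2)
  else n./2 * (if b then m else m.+2).

Lemma sum_row_perm m n c : 1 < n -> ~~ odd m -> 0 < c <= m ->
  \sum_(j < n) row_perm m n j c = rim_row_sum m n (odd c).
Proof.
move=> n_gt1 m_even c_range.
have flipE := addn_flip_col m_even c_range.
have foldE := double_fold_col m_even c_range.
rewrite -(big_mkord xpredT (fun j => row_perm m n j c)) /rim_row_sum /row_perm.
case: ifP => [n_odd | n_even] /=.
  set k := (n./2).-1; rewrite (_ : n = k.*2.+3); last lia.
  rewrite big_nat_recl // big_nat_recl // big_nat_recr //=.
  under eq_bigr => i _ do rewrite negbK.
  by rewrite sum_alternating negbK odd_double -flipE -foldE; lia.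
by rewrite [in LHS](_ : n = (n./2).*2) ?sum_alternating -?flipE; lia.
Qed.

Section WheelLabel.
Variables m n : nat.
Hypotheses (n_gt1 : 1 < n) (m_gt3 : 3 < m) (m_even : ~~ odd m).

Definition wheel_label := grid_label (row_perm m n) : option 'I_m * 'I_n -> nat.

Definition hub_col_sum := \sum_(j < n) (j * m.+1 + 1).

Definition rim_weight (b : bool) := hub_col_sum + 2 * (hub_col_sum + rim_row_sum m n b).

Definition hub_weight := \sum_(i < m) (hub_col_sum + rim_row_sum m n (~~ odd i)).

Lemma wheel_label_bij : is_bij_labeling wheel_label.
Proof.
apply: grid_label_bij => [j c|j c c']; [exact: row_perm_le | exact: row_perm_inj].
Qed.

Lemma sum_wheel_label a : \sum_(j < n) wheel_label (a, j) =
  hub_col_sum + (if a is Some i then rim_row_sum m n (~~ odd i) else 0).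
Proof.
rewrite sum_grid_label; congr (_ + _); case: a => [i|] /=.
  by rewrite sum_row_perm //; have := ltn_ord i; lia.
by rewrite big1 // => j _; rewrite row_perm0.
Qed.

Lemma ld_weight_wheel_label x :
  ld_weight (lex_wheel m n) wheel_label x =
  if x.1 is Some i then rim_weight (odd i) else hub_weight.
Proof.
rewrite ld_weight_lex_empty; case: x => [[i|] j] /=.
  rewrite sum_wheel_rel_Some 1?ltnW // !sum_wheel_label /=.
  by rewrite odd_ordS ?odd_ord_pred // negbK /rim_weight; lia.
by rewrite sum_wheel_rel_None; apply: eq_bigr => i _; rewrite sum_wheel_label.
Qed.

Lemma rim_row_sum_lt : rim_row_sum m n true < rim_row_sum m n false.
Proof. by rewrite /rim_row_sum; case: ifP; nia. Qed.

Lemma rim_weight_lt : rim_weight true < rim_weight false.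
Proof. by have := rim_row_sum_lt; rewrite /rim_weight; lia. Qed.

Lemma rim_weight_lt_hub b : rim_weight b < hub_weight.
Proof.
pose F i := hub_col_sum + rim_row_sum m n (~~ odd i).
have le_prefix : \sum_(0 <= i < 4) F i <= hub_weight.
  by rewrite /hub_weight -(big_mkord xpredT F) (big_cat_nat (leq0n 4) m_gt3) leq_addr.
have hub_gt0 : 0 < hub_col_sum.
  by rewrite /hub_col_sum; case: (n) n_gt1 => // n' _; rewrite big_ord_recl.
move: le_prefix; rewrite /F !big_nat_recr // big_geq //= /rim_weight.
by have := rim_row_sum_lt; case: b; lia.
Qed.

Lemma wheel_label_lda : local_distance_antimagic (lex_wheel m n) wheel_label.
Proof.
split=> [|x y]; first exact: wheel_label_bij.
rewrite /lex_rel /empty_rel andbF orbF !ld_weight_wheel_label.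
case: x y => [[i|] _] [[i'|] _] //= adj.
- have := rim_weight_lt; rewrite (odd_cycle_rel m_even adj).
  by case: (odd i) => /= lt; rewrite ?(ltn_eqF lt) ?(gtn_eqF lt).
- by rewrite ltn_eqF ?rim_weight_lt_hub.
- by rewrite gtn_eqF ?rim_weight_lt_hub.
Qed.

Lemma num_weights_wheel_label : num_weights (lex_wheel m n) wheel_label = 3.
Proof.
have hub0 := rim_weight_lt_hub false; have hub1 := rim_weight_lt_hub true.
have rim01 := rim_weight_lt.
have [n_gt0 m_gt1] : 0 < n /\ 1 < m by lia.
apply: (@num_weights_eq_size _ _ _ [:: hub_weight; rim_weight false; rim_weight true]).
- by rewrite /= !inE !gtn_eqF ?ltn_eqF.
- move=> [[i|] j]; rewrite ld_weight_wheel_label !inE ?eqxx ?orbT //.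
  by case: odd; rewrite eqxx ?orbT.
- move=> v; rewrite !inE => /or3P[] /eqP ->.
  + by exists (None, Ordinal n_gt0); rewrite ld_weight_wheel_label.
  + by exists (Some (Ordinal (ltnW m_gt1)), Ordinal n_gt0); rewrite ld_weight_wheel_label.
  + by exists (Some (Ordinal m_gt1), Ordinal n_gt0); rewrite ld_weight_wheel_label.
Qed.

End WheelLabel.

Theorem mainTheorem19 (n m : nat) :
  1 < n -> 3 < m -> ~~ odd m ->
  chi_ld_is (lex_rel (@wheel_rel m) (@empty_rel n)) 3.
Proof.
move=> n_gt1 m_gt3 m_even; split.
  exists (@wheel_label m n); split; first exact: wheel_label_lda.
  exact: num_weights_wheel_label.
move=> f f_lda; have [m_gt1 n_gt0] : 1 < m /\ 0 < n by lia.
have [x [y [z [exy eyz exz]]]] := lex_wheel_triangle m_gt1 n_gt0.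
exact: num_weights_triangle f_lda exy eyz exz.
Qed.
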